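(* Let $a,d$ be positive integers with $d$ not a perfect square, $\alpha=a+\sqrt d$, $N_\alpha=a^2-d$, and suppose $-N_\alpha$ is an odd perfect square. Let $t,u$ be positive integers with $\varepsilon=(t+u\sqrt d)/2$ a unit of the ring of integers of $\mathbb{Q}(\sqrt d)$, define $x_k+y_k\sqrt d=\alpha\varepsilon^{2k}$, suppose $y_{-1}>1$, and suppose that for some $\sigma\in\{1,-1\}$, $y_\sigma$ is the square of an integer. (a) If $t^2-du^2=4$, then $t\equiv2\pmod4$ and $u\equiv0\pmod4$. (b) If $t^2-du^2=-4$, then $u\equiv2\pmod4$. *)

From mathcomp Require Import all_boot all_order all_algebra all_field.
Set Implicit Arguments. Unset Strict Implicit. Unset Printing Implicit Defensive.
Import Order.TTheory GRing.Theory Num.Theory.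
Local Open Scope ring_scope.

(* Q(sqrt d) is realised inside the algebraic complex numbers algC. *)
Definition sqd (d : nat) : algC := sqrtC (d%:R).

Definition alphaQ (a d : nat) : algC := a%:R + sqd d.

Definition epsQ (t u d : nat) : algC := (t%:R + u%:R * sqd d) / 2%:R.

(* epsilon is a unit of the ring of integers of Q(sqrt d): both epsilon and
   its inverse are algebraic integers (they lie in Q(sqrt d) automatically). *)
Definition unit_ring_of_integers (e : algC) : Prop :=
  e != 0 /\ e \in Aint /\ e^-1 \in Aint.

(* y is the coefficient y_k in  x_k + y_k sqrt d = alpha * epsilon^(2k)
   (x_k, y_k rational; they are unique because d is not a square). *)
Definition is_yk (a d t u : nat) (k : int) (y : rat) : Prop :=
  exists x : rat,
    alphaQ a d * epsQ t u d ^ (2%:Z * k) = ratr x + ratr y * sqd d.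

From mathcomp Require Import all_boot all_order all_algebra all_field.
From mathcomp Require Import ring zify.
Import Order.TTheory GRing.Theory Num.Theory.

(* The only arithmetic input is that y_sigma is an integer.  Since
   N(eps) = +-1, eps^(2 sigma) is the square of (t + sigma u sqrt d) / 2, so
   y_sigma = (t^2 + d u^2 + 2 sigma a t u) / 4 and hence
   4 | t^2 + d u^2 + 2 a t u.  Together with t^2 - d u^2 = +-4 and
   d = a^2 + m^2 with m odd (so d = 1 or 2 mod 4), squares being 0 or 1
   mod 4 forces u even, then t even, and the halved equation
   (t/2)^2 - d (u/2)^2 = +-1 pins down the parities of t/2 and u/2. *)

Lemma sqrn_mod4 n : n ^ 2 %% 4 = odd n.
Proof. by rewrite -[n in LHS]odd_double_half; case: (odd n); nia. Qed.

Lemma sqrnD_odd_sqr_mod4 a m : odd m -> (a ^ 2 + m ^ 2) %% 4 = (odd a).+1.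
Proof. by move=> odd_m; rewrite -modnDm !sqrn_mod4 odd_m; case: (odd a). Qed.

Lemma muln_sqr_mod4 d v : d * v ^ 2 %% 4 = if odd v then d %% 4 else 0.
Proof. by rewrite -modnMmr sqrn_mod4; case: (odd v); rewrite ?muln1 ?muln0. Qed.

Lemma sqrn_double n : n.*2 ^ 2 = 4 * n ^ 2.
Proof. by rewrite -mul2n expnMn. Qed.

Lemma double_mod4 n : n.*2 %% 4 = (odd n).*2.
Proof. by rewrite -[n in LHS]odd_double_half; case: (odd n); lia. Qed.

Lemma even_double n : ~~ odd n -> exists m, n = m.*2.
Proof. by move=> /even_halfK n_half; exists n./2. Qed.

Definition unit_norm (t u d : nat) : Prop :=
  t ^ 2 = d * u ^ 2 + 4 \/ t ^ 2 + 4 = d * u ^ 2.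

Lemma norm_mod4_even {a d t u : nat} : d %% 4 = (odd a).+1 ->
  4 %| t ^ 2 + d * u ^ 2 + 2 * a * t * u -> t ^ 2 = d * u ^ 2 %[mod 4] ->
  ~~ odd u.
Proof.
move=> d_mod4 dvd4 t2_mod4; apply/negP => odd_u.
have [even_a odd_t] : ~~ odd a /\ odd t.
  move: t2_mod4; rewrite muln_sqr_mod4 odd_u sqrn_mod4 d_mod4.
  by case: (odd a); case: (odd t).
move: dvd4 (muln_sqr_mod4 d u) (sqrn_mod4 t) d_mod4.
by rewrite -[a]odd_double_half (negbTE even_a) odd_u odd_t; nia.
Qed.

Lemma norm4_mod4 {a d t u : nat} : d %% 4 = (odd a).+1 ->
  4 %| t ^ 2 + d * u ^ 2 + 2 * a * t * u -> t ^ 2 = d * u ^ 2 + 4 ->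
  t %% 4 = 2 /\ u %% 4 = 0.
Proof.
move=> d_mod4 dvd4 pell.
have [v u_def] : exists v, u = v.*2.
  by apply/even_double/(norm_mod4_even d_mod4 dvd4); rewrite pell -modnDmr modnn addn0.
have [s t_def] : exists s, t = s.*2.
  by apply/even_double; move: (sqrn_mod4 t); rewrite pell; case: (odd t); lia.
subst; have {}pell : s ^ 2 = d * v ^ 2 + 1 by move: pell; rewrite !sqrn_double; nia.
rewrite !double_mod4; move: (sqrn_mod4 s) (muln_sqr_mod4 d v) d_mod4; rewrite pell.
by case: (odd v) (odd s) (odd a) => [] [] []; lia.
Qed.

Lemma normN4_mod4 {a d t u : nat} : d %% 4 = (odd a).+1 ->
  4 %| t ^ 2 + d * u ^ 2 + 2 * a * t * u -> t ^ 2 + 4 = d * u ^ 2 ->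
  u %% 4 = 2.
Proof.
move=> d_mod4 dvd4 pell.
have [v u_def] : exists v, u = v.*2.
  by apply/even_double/(norm_mod4_even d_mod4 dvd4); rewrite -pell -modnDmr modnn addn0.
have [s t_def] : exists s, t = s.*2.
  apply/even_double; move: (sqrn_mod4 t); rewrite u_def sqrn_double in pell.
  by case: (odd t); lia.
subst; have {}pell : s ^ 2 + 1 = d * v ^ 2 by move: pell; rewrite !sqrn_double; nia.
rewrite double_mod4; move: (sqrn_mod4 s) (muln_sqr_mod4 d v) d_mod4; rewrite -pell.
by case: (odd v) (odd s) (odd a) => [] [] []; lia.
Qed.

Local Open Scope ring_scope.

Lemma sqd_sqr d : sqd d ^+ 2 = d%:R.
Proof. exact: sqrtCK. Qed.

Lemma sqd_Aint d : sqd d \in Aint.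
Proof.
apply: (@root_monic_Aint ('X^2 - (d%:R)%:P)).
- by rewrite /root !hornerE sqd_sqr subrr.
- by rewrite monicXnsubC.
- by rewrite polyOverXnsubC rpred_nat.
Qed.

Lemma sqd_Crat_square d : sqd d \in Crat -> exists m, d = (m ^ 2)%N.
Proof.
move=> /Cint_rat_Aint/(_ (sqd_Aint d)) sqd_int.
have : sqd d \is a Num.nat by rewrite natrEint sqd_int sqrtC_ge0 ler0n.
case/natrP => m sqd_m; exists m; apply/eqP.
by rewrite -(eqr_nat algC) natrX -sqd_m sqd_sqr.
Qed.

Lemma Crat_sqd_coord_inj {d : nat} {p q p' q' : algC} :
  ~ (exists m, d = (m ^ 2)%N) ->
  [/\ p \in Crat, q \in Crat, p' \in Crat & q' \in Crat] ->
  p + q * sqd d = p' + q' * sqd d -> q = q'.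
Proof.
move=> nsq [pQ qQ p'Q q'Q] /eqP; rewrite -subr_eq0 => /eqP E.
apply/eqP; apply/negPn/negP => neq_q; apply/nsq/sqd_Crat_square.
rewrite eq_sym -subr_eq0 in neq_q.
have -> : sqd d = (p - p') / (q' - q).
  apply: (mulIf neq_q); rewrite divfK //.
  by apply/eqP; rewrite -subr_eq0 -oppr_eq0 -E; apply/eqP; ring.
by rewrite rpredM ?rpredV ?rpredB.
Qed.

Lemma epsQ_mul_conj t u d :
  epsQ t u d * ((t%:R - u%:R * sqd d) / 2) = (t%:R ^+ 2 - d%:R * u%:R ^+ 2) / 4.
Proof. by rewrite /epsQ; field: (sqd_sqr d). Qed.

Section UnitSquare.

Variables t u d : nat.
Hypothesis normE : unit_norm t u d.

Lemma unit_norm_sqr : (t%:R ^+ 2 - d%:R * u%:R ^+ 2 : algC) ^+ 2 = 16.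
Proof.
case: normE => /(congr1 (fun n => n%:R : algC)); rewrite natrD natrM !natrX.
  by move=> E; ring: E.
by move=> /esym E; ring: E.
Qed.

Lemma epsQ_expz2_pm1 (k : int) : k = 1 \/ k = -1 ->
  epsQ t u d ^ (2%:Z * k) = ((t%:R + k%:~R * u%:R * sqd d) / 2) ^+ 2.
Proof.
case=> ->; rewrite ?mulr1 ?mulrN1 -?invr_expz -exprnP /epsQ ?mul1r //.
have unit_sqr : epsQ t u d ^+ 2 * ((t%:R - u%:R * sqd d) / 2) ^+ 2 = 1.
  by rewrite -exprMn epsQ_mul_conj expr_div_n unit_norm_sqr; field.
by rewrite (mulr1_eq unit_sqr) mulN1r mulNr.
Qed.

End UnitSquare.

Lemma alphaQ_mul_sqr_coord a d t u (k : int) : k = 1 \/ k = -1 ->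
  exists2 x, x \in Crat &
  alphaQ a d * ((t%:R + k%:~R * u%:R * sqd d) / 2) ^+ 2 =
  x + (t%:R ^+ 2 + d%:R * u%:R ^+ 2 + 2 * k%:~R * a%:R * t%:R * u%:R) / 4 * sqd d.
Proof.
move=> k_pm1.
exists ((a%:R * (t%:R ^+ 2 + d%:R * u%:R ^+ 2) + 2 * k%:~R * d%:R * t%:R * u%:R) / 4).
  by rewrite !(rpredD, rpredM, rpredV, rpredX, rpred_int, rpred_nat).
by rewrite /alphaQ; case: k_pm1 => ->; field: (sqd_sqr d).
Qed.

Lemma is_yk_pm1 {a d t u : nat} {k : int} {y : rat} :
  ~ (exists m, d = (m ^ 2)%N) -> unit_norm t u d ->
  k = 1 \/ k = -1 -> is_yk a d t u k y ->
  ratr y = (t%:R ^+ 2 + d%:R * u%:R ^+ 2 + 2 * k%:~R * a%:R * t%:R * u%:R) / 4 :> algC.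
Proof.
move=> nsq normE k_pm1 [x E].
have [X XQ XE] := alphaQ_mul_sqr_coord a d t u _ k_pm1.
rewrite epsQ_expz2_pm1 // XE in E.
apply/esym/(Crat_sqd_coord_inj nsq _ E); split; rewrite ?Crat_rat //.
by rewrite !(rpredD, rpredM, rpredV, rpredX, rpred_int, rpred_nat).
Qed.

Lemma is_yk_int_dvd4 {a d t u : nat} {k : int} {y : rat} :
  ~ (exists m, d = (m ^ 2)%N) -> unit_norm t u d ->
  k = 1 \/ k = -1 -> is_yk a d t u k y -> (ratr y : algC) \in Num.int ->
  (4 %| t ^ 2 + d * u ^ 2 + 2 * a * t * u)%N.
Proof.
move=> nsq normE k_pm1 /(is_yk_pm1 nsq normE k_pm1) yE yZ.
rewrite -dvdC_nat !nCdivE; apply/dvdCP.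
case: k_pm1 => k_def; [exists (ratr y) | exists (ratr y + (a * t * u)%:R)];
  rewrite ?rpredD ?rpred_nat // yE k_def !(natrD, natrX, natrM); by field.
Qed.

Theorem lemma5p4 (a d t u : nat) :
  (0 < a)%N -> (0 < d)%N ->
  ~ (exists m : nat, d = (m ^ 2)%N) ->
  (* -N_alpha = d - a^2 is an odd perfect square *)
  (exists m : nat, odd m /\ (d%:Z - (a ^ 2)%N%:Z = (m ^ 2)%N%:Z)) ->
  (0 < t)%N -> (0 < u)%N ->
  unit_ring_of_integers (epsQ t u d) ->
  (* y_{-1} > 1 *)
  (exists y : rat, is_yk a d t u (-1) y /\ 1 < y) ->
  (* y_sigma is the square of an integer for some sigma in {1,-1} *)
  (exists (sigma : int) (n : int) ,
      (sigma = 1 \/ sigma = -1) /\ is_yk a d t u sigma (n%:~R ^+ 2)) ->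
  ((t ^ 2)%N%:Z - (d * u ^ 2)%N%:Z = 4 ->
     (t %% 4 = 2)%N /\ (u %% 4 = 0)%N) /\
  ((t ^ 2)%N%:Z - (d * u ^ 2)%N%:Z = -4 ->
     (u %% 4 = 2)%N).
Proof.
move=> _ _ nsq [m [odd_m d_sub]] _ _ _ _ [k [n [k_pm1 yk]]].
have d_mod4 : (d %% 4 = (odd a).+1)%N.
  have -> : d = (a ^ 2 + m ^ 2)%N by lia.
  exact: sqrnD_odd_sqr_mod4.
have yZ : (ratr (n%:~R ^+ 2) : algC) \in Num.int.
  by rewrite rmorphXn /= ratr_int rpredX ?rpred_int.
have dvd4 normE := is_yk_int_dvd4 nsq normE k_pm1 yk yZ.
split=> normN.
  have pell : (t ^ 2 = d * u ^ 2 + 4)%N by lia.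
  by apply: (norm4_mod4 d_mod4 _ pell); apply: dvd4; left.
have pell : (t ^ 2 + 4 = d * u ^ 2)%N by lia.
by apply: (normN4_mod4 d_mod4 _ pell); apply: dvd4; right.
Qed.
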